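(* Let $\{S_i\mid i\in I\}$ be a collection of semigroups and let $F=\prod^{*}\{S_i\mid i\in I\}$ be their semigroup free product. Then $F^1$ is weakly right coherent if and only if each $S_i^1$ ($i\in I$) is weakly right coherent.
   Context: For a semigroup $S$, $S^1$ denotes $S$ if $S$ is a monoid and otherwise $S$ with an identity adjoined. A monoid $M$ is weakly right coherent (WRC) if every finitely generated right ideal of $M$ is finitely presented as a right $M$-act (known to be equivalent to: $M$ is right ideal Howson, i.e. the intersection of any two finitely generated right ideals is finitely generated, and finitely right equated, i.e. every $\mathbf{r}_M(a)=\{(s,t)\mid as=at\}$ is finitely generated as a right congruence). The semigroup free product of pairwise disjoint semigroups $S_i$ consists of sequences $s_1*\dots*s_n$ with $s_j\in\bigsqcup S_i$ and consecutive entries from different $S_i$, multiplied by concatenation, multiplying the two adjacent entries if they lie in the same $S_i$. *)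

From Stdlib Require Import List ClassicalEpsilon.
From mathcomp Require Import ssreflect ssrfun ssrbool eqtype ssrnat fintype.
Set Implicit Arguments. Unset Strict Implicit. Unset Printing Implicit Defensive.

Definition is_identity {M : Type} (mul : M -> M -> M) (e : M) : Prop :=
  forall x, mul e x = x /\ mul x e = x.

Definition fg_right_ideal {M : Type} (mul : M -> M -> M) (X : M -> Prop) : Prop :=
  exists (n : nat) (a : 'I_n -> M),
    forall y, X y <-> exists (k : 'I_n) (m : M), y = mul (a k) m.

(* The free right M-act of rank n is 'I_n * M with (k,m).s = (k, m s).
   A right congruence on it: *)
Definition right_congruence {M : Type} (mul : M -> M -> M) {n : nat}
    (R : 'I_n * M -> 'I_n * M -> Prop) : Prop :=
  (forall p, R p p) /\
  (forall p q, R p q -> R q p) /\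
  (forall p q r, R p q -> R q r -> R p r) /\
  (forall p q (s : M), R p q -> R (p.1, mul p.2 s) (q.1, mul q.2 s)).

Definition cong_gen {M : Type} (mul : M -> M -> M) {n : nat}
    (H : list (('I_n * M) * ('I_n * M))) (p q : 'I_n * M) : Prop :=
  forall R : 'I_n * M -> 'I_n * M -> Prop,
    right_congruence mul R -> (forall h, In h H -> R h.1 h.2) -> R p q.

(* The right ideal X, viewed as a right M-act, is finitely presented:
   there is a surjective act morphism from a free act of finite rank onto X,
   (k,m) |-> x_k m, whose kernel is a finitely generated right congruence. *)
Definition fp_right_ideal {M : Type} (mul : M -> M -> M) (X : M -> Prop) : Prop :=
  exists (n : nat) (x : 'I_n -> M) (H : list (('I_n * M) * ('I_n * M))),
    (forall k, X (x k)) /\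
    (forall y, X y -> exists (k : 'I_n) (m : M), y = mul (x k) m) /\
    (forall p q : 'I_n * M,
        mul (x p.1) p.2 = mul (x q.1) q.2 <-> cong_gen mul H p q).

(* Weakly right coherent monoid (the identity is only used implicitly). *)
Definition WRC {M : Type} (mul : M -> M -> M) : Prop :=
  forall X : M -> Prop, fg_right_ideal mul X -> fp_right_ideal mul X.

(* S with an identity adjoined (None is the new identity). *)
Definition adjoin_one {T : Type} (op : T -> T -> T) (x y : option T) : option T :=
  match x, y with
  | None, _ => y
  | _, None => x
  | Some a, Some b => Some (op a b)
  end.

(* "S^1 is weakly right coherent": S^1 = S if S is a monoid, otherwise S with
   an identity adjoined. *)
Definition WRC1 {T : Type} (op : T -> T -> T) : Prop :=
  ((exists e, is_identity op e) -> WRC op) /\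
  ((~ exists e, is_identity op e) -> WRC (adjoin_one op)).

Section FreeProduct.
Variables (I : Type) (S : I -> Type) (op : forall i, S i -> S i -> S i).

Fixpoint alt (w : list (sigT S)) : Prop :=
  match w with
  | x :: w' => match w' with
               | y :: _ => projT1 x <> projT1 y /\ alt w'
               | nil => True
               end
  | nil => True
  end.

Definition merge_letters (x y : sigT S) : option (sigT S) :=
  match excluded_middle_informative (projT1 x = projT1 y) with
  | left e => Some (existT S (projT1 y)
                      (op (eq_rect _ S (projT2 x) _ e) (projT2 y)))
  | right _ => None
  end.

Fixpoint wmul (u v : list (sigT S)) : list (sigT S) :=
  match u with
  | nil => v
  | x :: u' =>
    match u' with
    | nil => match v with
             | nil => x :: nil
             | y :: v' => match merge_letters x y with
                          | Some z => z :: v'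
                          | None => x :: y :: v'
                          end
             end
    | _ :: _ => x :: wmul u' v
    end
  end.

Lemma merge_tag x y z : merge_letters x y = Some z -> projT1 z = projT1 y.
Proof.
rewrite /merge_letters; case: excluded_middle_informative => // e [<-] //.
Qed.

Lemma merge_none x y : merge_letters x y = None -> projT1 x <> projT1 y.
Proof. rewrite /merge_letters; case: excluded_middle_informative => //. Qed.

Lemma alt_tail x w : alt (x :: w) -> alt w.
Proof. by case: w => [|y w] //= [_ ?]. Qed.

Lemma alt_head_change z y w : projT1 z = projT1 y -> alt (y :: w) -> alt (z :: w).
Proof. by case: w => [|t w] //= -> . Qed.


Lemma wmul_hd x u v : exists x' r, wmul (x :: u) v = x' :: r /\ projT1 x' = projT1 x.
Proof.
case: u => [|y u] /=.
- case: v => [|y v]; first by exists x, nil.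
  case E: (merge_letters x y) => [z|].
  + exists z, v; split => //. rewrite (merge_tag E).
    move: E; rewrite /merge_letters; case: excluded_middle_informative => // e _; by rewrite e.
  + by exists x, (y :: v).
- by exists x, (wmul (y :: u) v).
Qed.

Lemma wmul_alt u v : alt u -> alt v -> alt (wmul u v).
Proof.
elim: u => [|x u IH] //= Hu Hv.
case: u IH Hu => [|y u] IH Hu.
- clear IH; case: v Hv => [|y v] Hv //.
  case E: (merge_letters x y) => [z|].
  + exact: alt_head_change (merge_tag E) Hv.
  + by split; [exact: merge_none E|].
- case: Hu => Hxy Hu.
  have := IH Hu Hv. case: (wmul_hd y u v) => x' [r [-> Ht]] Halt.
  by split => //; rewrite Ht.
Qed.

Lemma wmul_nonnil u v : u <> nil -> wmul u v <> nil.
Proof. by case: u => [//|x u] _; case: (wmul_hd x u v) => x' [r [-> _]]. Qed.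

Definition FP : Type := { w : list (sigT S) | w <> nil /\ alt w }.

Definition fp_mul (u v : FP) : FP :=
  exist _ (wmul (proj1_sig u) (proj1_sig v))
    (conj (@wmul_nonnil _ (proj1_sig v) (proj1 (proj2_sig u)))
          (wmul_alt (proj2 (proj2_sig u)) (proj2 (proj2_sig v)))).

End FreeProduct.

From mathcomp Require Import ssreflect ssrfun ssrbool eqtype ssrnat seq fintype.
From Stdlib Require Import List ClassicalEpsilon ProofIrrelevance.
Set Implicit Arguments. Unset Strict Implicit. Unset Printing Implicit Defensive.

(* For a monoid M, weak right coherence amounts to two finiteness conditions:
   every intersection aM \cap bM of principal right ideals is finitely
   generated, and every kernel {(s, t) | as = at} is a finitely generated right
   congruence.  A finite presentation of aM \cup bM yields generators of
   aM \cap bM (the relations whose two sides come from different principal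
   ideals), and conversely these data give an explicit finite presentation of
   any finitely generated right ideal.

   Both conditions pass to retracts.  Adjoining an identity to a monoid
   preserves and reflects them, which reduces everything to the monoids S_i^1
   and F^1.  F^1 is the monoid of alternating words, and each S_i^1 is a retract
   of it (erase the letters of the other factors).  Conversely, if u ends with
   the letter a of S_i then us = ut iff a h(s) = a h(t) in S_i^1 and the tails
   of s and t after h agree, where h is the S_i-part of the first letter; and
   for two such words uF^1 \cap vF^1 is empty, principal, or the image of an
   intersection aS_i^1 \cap bS_i^1. *)

(** * Congruences on right acts *)

Section ActCongruence.
Variables (M X : Type) (act : X -> M -> X).

Definition act_congruence (R : X -> X -> Prop) : Prop :=
  (forall p, R p p) /\ (forall p q, R p q -> R q p) /\
  (forall p q r, R p q -> R q r -> R p r) /\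
  (forall p q s, R p q -> R (act p s) (act q s)).

Definition act_cong_gen (H : list (X * X)) (p q : X) : Prop :=
  forall R, act_congruence R -> (forall h, In h H -> R h.1 h.2) -> R p q.

Variable H : list (X * X).

Lemma act_cong_gen_congruence : act_congruence (act_cong_gen H).
Proof.
split; [|split; [|split]].
- by move=> p R [Rr _].
- by move=> p q C R RR HR; case: (RR) => _ [Rs _]; apply: Rs; exact: C.
- move=> p q r C1 C2 R RR HR; case: (RR) => _ [_ [Rt _]].
  exact: Rt (C1 R RR HR) (C2 R RR HR).
- by move=> p q s C R RR HR; case: (RR) => _ [_ [_ Rc]]; apply: Rc; exact: C.
Qed.

Lemma act_cong_gen_refl p : act_cong_gen H p p.
Proof. by case: act_cong_gen_congruence => + _; apply. Qed.

Lemma act_cong_gen_sym p q : act_cong_gen H p q -> act_cong_gen H q p.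
Proof. by case: act_cong_gen_congruence => _ [+ _]; apply. Qed.

Lemma act_cong_gen_trans p q r :
  act_cong_gen H p q -> act_cong_gen H q r -> act_cong_gen H p r.
Proof. by case: act_cong_gen_congruence => _ [_ [+ _]]; apply. Qed.

Lemma act_cong_gen_act p q s :
  act_cong_gen H p q -> act_cong_gen H (act p s) (act q s).
Proof. by case: act_cong_gen_congruence => _ [_ [_]]; apply. Qed.

Lemma act_cong_gen_mem h : In h H -> act_cong_gen H h.1 h.2.
Proof. by move=> Hh R _; apply. Qed.

End ActCongruence.

Lemma kernel_act_congruence (M X Y : Type) (actX : X -> M -> X)
    (actY : Y -> M -> Y) (f : X -> Y) :
  (forall x s, f (actX x s) = actY (f x) s) ->
  act_congruence actX (fun p q => f p = f q).
Proof.
move=> f_act; split; [|split; [|split]] => //.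
- by move=> p q r -> ->.
- by move=> p q s E; rewrite !f_act E.
Qed.

Section ActMorphism.
Variables (M N X Y : Type) (actX : X -> M -> X) (actY : Y -> N -> Y).
Variables (f : X -> Y) (g : M -> N).
Hypothesis f_act : forall x s, f (actX x s) = actY (f x) (g s).

Lemma act_cong_gen_morph (H : list (X * X)) (G : list (Y * Y)) p q :
  (forall h, In h H -> act_cong_gen actY G (f h.1) (f h.2)) ->
  act_cong_gen actX H p q -> act_cong_gen actY G (f p) (f q).
Proof.
move=> HG C; apply: (C (fun p q => act_cong_gen actY G (f p) (f q))) => //.
split; [|split; [|split]] => /=.
- by move=> x; apply: act_cong_gen_refl.
- by move=> x y; apply: act_cong_gen_sym.
- by move=> x y z; apply: act_cong_gen_trans.
- by move=> x y s Cxy; rewrite !f_act; apply: act_cong_gen_act.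
Qed.

End ActMorphism.

(** * Weak right coherence of a monoid *)

Lemma In_mem (T : eqType) (x : T) (s : list T) : x \in s -> In x s.
Proof. by elim: s => [|y s IH] //=; rewrite inE => /orP [/eqP ->|/IH]; auto. Qed.

Lemma In_enum_ord n (k : 'I_n) : In k (enum 'I_n).
Proof. by apply: In_mem; rewrite mem_enum. Qed.

Definition free_act {M : Type} (mul : M -> M -> M) {n : nat}
  (p : 'I_n * M) (s : M) : 'I_n * M := (p.1, mul p.2 s).

Lemma cong_genE {M : Type} (mul : M -> M -> M) n (H : list (('I_n * M) * ('I_n * M))) :
  cong_gen mul H = act_cong_gen (free_act mul) H.
Proof. by []. Qed.

Definition finitely_right_equated {M : Type} (mul : M -> M -> M) : Prop :=
  forall a, exists G, forall s t, mul a s = mul a t <-> act_cong_gen mul G s t.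

Definition meet_witness {M : Type} (mul : M -> M -> M) (a b : M) (L : list (M * M)) :=
  (forall p, In p L -> mul a p.1 = mul b p.2) /\
  (forall s t, mul a s = mul b t ->
     exists2 p, In p L & exists m, mul a s = mul (mul a p.1) m).

Definition principal_right_Howson {M : Type} (mul : M -> M -> M) : Prop :=
  forall a b, exists L, meet_witness mul a b L.

Section Monoid.
Variables (M : Type) (mul : M -> M -> M) (e : M).
Hypothesis mulA : forall x y z, mul x (mul y z) = mul (mul x y) z.
Hypothesis mul1m : forall x, mul e x = x.
Hypothesis mulm1 : forall x, mul x e = x.

Lemma meet_witness_mem_l a b m : b = mul a m -> meet_witness mul a b [:: (m, e)].
Proof.
move=> ->; split=> [p [<-|[]] /=|s t ->]; first by rewrite mulm1.
by exists (m, e); [left | exists t].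
Qed.

Lemma meet_witness_mem_r a b m : a = mul b m -> meet_witness mul a b [:: (e, m)].
Proof.
move=> Ea; split=> [p [<-|[]] /=|s t _]; first by rewrite mulm1.
by exists (e, m); [left | exists s; rewrite mulm1].
Qed.

Lemma WRC_finitely_right_equated : WRC mul -> finitely_right_equated mul.
Proof.
move=> W a.
have fgX : fg_right_ideal mul (fun y => exists m, y = mul a m).
  exists 1, (fun _ => a) => y; split; first by case=> m ->; exists ord0, m.
  by case=> _ [m ->]; exists m.
have [n [x [H [Xx [Xgen Hker]]]]] := W _ fgX.
have [u Hu] := choice _ Xx.
have [k0 [w Hw]] := Xgen a (ex_intro _ e (esym (mulm1 a))).
pose phi (p : 'I_n * M) := mul (u p.1) p.2.
have phi_act p s : phi (free_act mul p s) = mul (phi p) s by rewrite /phi mulA.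
have x_phi p : mul (x p.1) p.2 = mul a (phi p) by rewrite /phi mulA -Hu.
pose G := (e, mul (u k0) w) :: map (fun h => (phi h.1, phi h.2)) H.
exists G => s t; split.
- move=> Est.
  have : cong_gen mul H (k0, mul w s) (k0, mul w t).
    by apply/Hker; rewrite /= !mulA -Hw.
  rewrite cong_genE => /(act_cong_gen_morph (g := id) phi_act (G := G)) Cw.
  (* (e, u_k0 w) is a relation since a = x_k0 w = a u_k0 w; it relates r to u_k0 w r *)
  have Ew r : act_cong_gen mul G r (phi (k0, mul w r)).
    rewrite /phi /= mulA -{1}(mul1m r); apply: act_cong_gen_act.
    by apply: (act_cong_gen_mem (h := (e, _))); left.
  apply: act_cong_gen_trans (Ew s) _; apply: act_cong_gen_trans (act_cong_gen_sym (Ew t)).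
  apply: Cw => h Hh; apply: (act_cong_gen_mem (h := (phi h.1, phi h.2))); right.
  exact: (in_map (fun h => (phi h.1, phi h.2))).
- move=> C; apply: (C (fun s t => mul a s = mul a t)).
    exact: kernel_act_congruence (mulA a).
  move=> h [<-|/in_map_iff [g [<- Hg]]] /=; first by rewrite mulm1 mulA -Hu -Hw.
  by rewrite -!x_phi; apply/Hker; apply: act_cong_gen_mem.
Qed.

Section TwoGenerated.
Variables (a b : M) (n : nat) (x : 'I_n -> M) (H : list (('I_n * M) * ('I_n * M))).
Hypothesis Hker : forall p q, mul (x p.1) p.2 = mul (x q.1) q.2 <-> cong_gen mul H p q.
Variables (side : 'I_n -> bool) (c : 'I_n -> M).
Hypothesis x_side : forall k, x k = mul (if side k then a else b) (c k).
Variables (ka kb : 'I_n) (wa wb : M).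
Hypotheses (a_x : a = mul (x ka) wa) (b_x : b = mul (x kb) wb).

Definition oriented (flag : bool) (u v : M) : M * M := if flag then (u, v) else (v, u).

(* A defining relation x_k m = x_l m' whose two sides lie in different
   principal ideals yields an element of aM \cap bM; so do a and b themselves
   when a \in bM or b \in aM. *)
Definition meet_generators : list (M * M) :=
  flat_map (fun h => if side h.1.1 == side h.2.1 then nil
                     else oriented (side h.1.1) (mul (c h.1.1) h.1.2)
                                   (mul (c h.2.1) h.2.2) :: nil) H ++
  (if side ka then nil else oriented false (mul (c ka) wa) e :: nil) ++
  (if side kb then oriented true (mul (c kb) wb) e :: nil else nil).

Definition in_meet_ideal (y : M) : Prop :=
  exists2 p, In p meet_generators & exists m, y = mul (mul a p.1) m.

Lemma relation_defined h : In h H -> mul (x h.1.1) h.1.2 = mul (x h.2.1) h.2.2.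
Proof. by move=> Hh; apply/Hker; apply: act_cong_gen_mem. Qed.

Lemma oriented_relation h : In h H -> side h.1.1 != side h.2.1 ->
  let p := oriented (side h.1.1) (mul (c h.1.1) h.1.2) (mul (c h.2.1) h.2.2) in
  mul a p.1 = mul b p.2 /\ mul (x h.1.1) h.1.2 = mul a p.1.
Proof.
move=> /relation_defined; rewrite !x_side /oriented.
by case: (side h.1.1); case: (side h.2.1) => //=; rewrite -!mulA.
Qed.

Lemma meet_generators_sound p : In p meet_generators -> mul a p.1 = mul b p.2.
Proof.
rewrite /meet_generators !in_app_iff => -[|[]].
- case/in_flat_map => h [Hh]; case: eqP => // /eqP Hne [<-|[]].
  by case: (oriented_relation Hh Hne).
- case E: (side ka) => // -[<-|[]] /=.
  by rewrite mulm1 a_x x_side E -mulA.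
- case E: (side kb) => // -[<-|[]] /=.
  by rewrite mulm1 b_x x_side E -mulA.
Qed.

Lemma in_meet_ideal_mul y r : in_meet_ideal y -> in_meet_ideal (mul y r).
Proof. by case=> p Hp [m ->]; exists p => //; exists (mul m r); rewrite mulA. Qed.

(* Along a chain of defining relations, the common value keeps the side
   (aM or bM) of its generator unless it lies in the ideal generated by the
   meet generators. *)
Lemma side_congruence :
  act_congruence (free_act mul) (fun p q => mul (x p.1) p.2 = mul (x q.1) q.2 /\
    (side p.1 = side q.1 \/ in_meet_ideal (mul (x p.1) p.2))).
Proof.
split; [|split; [|split]].
- by move=> p; split => //; left.
- by move=> p q [E [Es|Jp]]; split => //; [left | right; rewrite -E].
- move=> p q r [E1 [S1|J1]] [E2 [S2|J2]]; split; try by rewrite E1 E2.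
  + by left; rewrite S1 S2.
  + by right; rewrite E1.
  + by right.
  + by right.
- move=> p q s [E [Es|Jp]]; split; rewrite /= ?mulA ?E //; first by left.
  by right; apply: in_meet_ideal_mul; rewrite -E.
Qed.

Lemma meet_generators_complete s t : mul a s = mul b t -> in_meet_ideal (mul a s).
Proof.
move=> Est.
have : cong_gen mul H (ka, mul wa s) (kb, mul wb t).
  by apply/Hker; rewrite /= !mulA -a_x -b_x.
case/(_ _ side_congruence) => [h Hh|_ ] /=.
  split; first exact: relation_defined.
  case: (boolP (side h.1.1 == side h.2.1)) => [/eqP|Hne]; [by left | right].
  case: (oriented_relation Hh Hne) => _ ->.
  exists (oriented (side h.1.1) (mul (c h.1.1) h.1.2) (mul (c h.2.1) h.2.2)).
    rewrite /meet_generators !in_app_iff; left; apply/in_flat_map.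
    by exists h; rewrite (negbTE Hne); split => //; left.
  by exists e; rewrite mulm1.
rewrite mulA -a_x; case=> [Eside|//].
have [Ea|Ea] := boolP (side ka).
- have Eb : side kb by rewrite -Eside.
  exists (oriented true (mul (c kb) wb) e).
    by rewrite /meet_generators Ea Eb !in_app_iff /=; auto.
  by exists t; rewrite /= Est b_x x_side Eb !mulA.
- exists (oriented false (mul (c ka) wa) e).
    by rewrite /meet_generators (negbTE Ea) !in_app_iff /=; auto.
  by exists s; rewrite /= mulm1.
Qed.

End TwoGenerated.

Lemma WRC_principal_right_Howson : WRC mul -> principal_right_Howson mul.
Proof.
move=> W a b.
pose g (k : 'I_2) := if val k == 0 then a else b.
have fgX : fg_right_ideal mul (fun y => (exists m, y = mul a m) \/ (exists m, y = mul b m)).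
  exists 2, g => y; split.
  - by case=> -[m ->]; [exists ord0, m | exists (@Ordinal 2 1 isT), m].
  - by case=> k [m ->]; rewrite /g; case: (val k == 0); [left|right]; exists m.
have [n [x [H [Xx [Xgen Hker]]]]] := W _ fgX.
have side_of k : exists c : bool * M, x k = mul (if c.1 then a else b) c.2.
  by case: (Xx k) => -[m E]; [exists (true, m) | exists (false, m)].
have [sc Hsc] := choice _ side_of.
have [ka [wa a_x]] := Xgen a (or_introl (ex_intro _ e (esym (mulm1 a)))).
have [kb [wb b_x]] := Xgen b (or_intror (ex_intro _ e (esym (mulm1 b)))).
exists (meet_generators H (fun k => (sc k).1) (fun k => (sc k).2) ka kb wa wb).
split=> [p|s t]; first exact: meet_generators_sound.
by move=> /(meet_generators_complete Hker Hsc a_x b_x).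
Qed.

Section StandardPresentation.
Variables (n : nat) (a : 'I_n -> M).
Variables (G : M -> list (M * M)) (L : M * M -> list (M * M)).
Hypothesis G_ker : forall u s t, mul u s = mul u t <-> act_cong_gen mul (G u) s t.
Hypothesis L_meet : forall u v, meet_witness mul u v (L (u, v)).

Definition kernel_relations : list (('I_n * M) * ('I_n * M)) :=
  flat_map (fun k => map (fun g => ((k, g.1), (k, g.2))) (G (a k))) (enum 'I_n).

Definition meet_relations : list (('I_n * M) * ('I_n * M)) :=
  flat_map (fun k => flat_map (fun l =>
    map (fun p => ((k, p.1), (l, p.2))) (L (a k, a l))) (enum 'I_n)) (enum 'I_n).

Let H := kernel_relations ++ meet_relations.

Lemma kernel_relations_cong k s t :
  mul (a k) s = mul (a k) t -> cong_gen mul H (k, s) (k, t).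
Proof.
move=> /G_ker; rewrite cong_genE.
apply: (act_cong_gen_morph (f := pair k) (g := id)) => // h Hh.
apply: (act_cong_gen_mem (h := ((k, h.1), (k, h.2)))); apply/in_app_iff; left.
apply/in_flat_map; exists k; split; first exact: In_enum_ord.
exact: (in_map (fun g => ((k, g.1), (k, g.2)))).
Qed.

Lemma standard_presentation p q :
  mul (a p.1) p.2 = mul (a q.1) q.2 <-> cong_gen mul H p q.
Proof.
case: p q => [k s] [l t] /=; split.
- move=> Est; have [L_sound L_complete] := L_meet (a k) (a l).
  have [r Hr [m Em]] := L_complete _ _ Est.
  have Ers : mul (a k) s = mul (a k) (mul r.1 m) by rewrite mulA -Em.
  have Ert : mul (a l) (mul r.2 m) = mul (a l) t.
    by rewrite mulA -(L_sound _ Hr) -Em Est.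
  rewrite cong_genE in Ers Ert *.
  apply: act_cong_gen_trans (kernel_relations_cong Ers) _.
  apply: act_cong_gen_trans (kernel_relations_cong Ert).
  apply: (act_cong_gen_act (p := (k, r.1)) (q := (l, r.2))).
  apply: (act_cong_gen_mem (h := ((k, r.1), (l, r.2)))); apply/in_app_iff; right.
  apply/in_flat_map; exists k; split; first exact: In_enum_ord.
  apply/in_flat_map; exists l; split; first exact: In_enum_ord.
  exact: (in_map (fun p => ((k, p.1), (l, p.2)))).
- move=> C; apply: (C (fun p q => mul (a p.1) p.2 = mul (a q.1) q.2)).
    by apply: kernel_act_congruence => p r; rewrite /= mulA.
  move=> h /in_app_iff [].
  + case/in_flat_map => k1 [_ /in_map_iff [g [<- Hg]]] /=.
    by apply/G_ker; apply: act_cong_gen_mem.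
  + case/in_flat_map => k1 [_ /in_flat_map [l1 [_ /in_map_iff [p [<- Hp]]]]].
    by case: (L_meet (a k1) (a l1)) => + _; apply.
Qed.

End StandardPresentation.

Lemma principal_right_Howson_finitely_right_equated_WRC :
  principal_right_Howson mul -> finitely_right_equated mul -> WRC mul.
Proof.
move=> Hph Hfre X [n [a Ha]].
have [G G_ker] := choice _ Hfre.
have [L HL] := choice _ (fun p : M * M => Hph p.1 p.2).
exists n, a, (kernel_relations a G ++ meet_relations a L); split; [|split].
- by move=> k; apply/Ha; exists k, e; rewrite mulm1.
- by move=> y /Ha.
- by apply: standard_presentation => // u v; apply: (HL (u, v)).
Qed.

Lemma WRCE : WRC mul <-> principal_right_Howson mul /\ finitely_right_equated mul.
Proof.
split=> [W|[]]; last exact: principal_right_Howson_finitely_right_equated_WRC.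
by split; [apply: WRC_principal_right_Howson | apply: WRC_finitely_right_equated].
Qed.

End Monoid.

(** * Retracts and adjoined identities *)

Section Retract.
Variables (T M : Type) (mulT : T -> T -> T) (mul : M -> M -> M).
Variables (emb : T -> M) (proj : M -> T).
Hypothesis emb_mul : forall x y, emb (mulT x y) = mul (emb x) (emb y).
Hypothesis proj_mul : forall x y, proj (mul x y) = mulT (proj x) (proj y).
Hypothesis embK : cancel emb proj.
Hypothesis mulTA : forall x y z, mulT x (mulT y z) = mulT (mulT x y) z.

Lemma retract_principal_right_Howson :
  principal_right_Howson mul -> principal_right_Howson mulT.
Proof.
move=> H a b; have [L [L_sound L_complete]] := H (emb a) (emb b).
exists (map (fun q => (proj q.1, proj q.2)) L); split.
- by move=> q /in_map_iff [q' [<- Hq']] /=; rewrite -(embK a) -(embK b) -!proj_mul L_sound.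
- move=> s t Est.
  have /L_complete [q Hq [m Em]] : mul (emb a) (emb s) = mul (emb b) (emb t).
    by rewrite -!emb_mul Est.
  exists (proj q.1, proj q.2); first exact: (in_map (fun q => (proj q.1, proj q.2))).
  by exists (proj m); rewrite /= -{1}(embK a) -{1}(embK s) -proj_mul Em !proj_mul embK.
Qed.

Lemma retract_finitely_right_equated :
  finitely_right_equated mul -> finitely_right_equated mulT.
Proof.
move=> H a; have [G G_ker] := H (emb a).
exists (map (fun q => (proj q.1, proj q.2)) G) => s t; split.
- move=> Est; have /G_ker : mul (emb a) (emb s) = mul (emb a) (emb t) by rewrite -!emb_mul Est.
  move=> /(act_cong_gen_morph (f := proj) (g := proj) proj_mul) C; rewrite -(embK s) -(embK t).
  apply: C => h Hh; apply: (act_cong_gen_mem (h := (proj h.1, proj h.2))).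
  exact: (in_map (fun q => (proj q.1, proj q.2))).
- move=> C; apply: (C (fun s t => mulT a s = mulT a t)); first exact: kernel_act_congruence.
  move=> h /in_map_iff [q [<- Hq]] /=.
  by rewrite -(embK a) -!proj_mul; congr proj; apply/G_ker; apply: act_cong_gen_mem.
Qed.

Variables (eT : T) (e : M).
Hypotheses (mulT1m : forall x, mulT eT x = x) (mulTm1 : forall x, mulT x eT = x).
Hypothesis mulA : forall x y z, mul x (mul y z) = mul (mul x y) z.
Hypotheses (mul1m : forall x, mul e x = x) (mulm1 : forall x, mul x e = x).

Lemma retract_WRC : WRC mul -> WRC mulT.
Proof.
rewrite (WRCE mulA mul1m mulm1) (WRCE mulTA mulT1m mulTm1) => -[Hph Hfre].
by split; [apply: retract_principal_right_Howson Hph | apply: retract_finitely_right_equated].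
Qed.

End Retract.

Lemma adjoin_oneA {T : Type} (op : T -> T -> T) :
  (forall x y z, op x (op y z) = op (op x y) z) ->
  forall x y z, adjoin_one op x (adjoin_one op y z) = adjoin_one op (adjoin_one op x y) z.
Proof. by move=> opA [x|] [y|] [z|] //=; rewrite opA. Qed.

Lemma adjoin_one1m {T : Type} (op : T -> T -> T) x : adjoin_one op None x = x.
Proof. by []. Qed.

Lemma adjoin_onem1 {T : Type} (op : T -> T -> T) x : adjoin_one op x None = x.
Proof. by case: x. Qed.

Section AdjoinToMonoid.
Variables (M : Type) (mul : M -> M -> M) (e : M).
Hypothesis mulA : forall x y z, mul x (mul y z) = mul (mul x y) z.
Hypothesis mul1m : forall x, mul e x = x.
Hypothesis mulm1 : forall x, mul x e = x.

Local Notation mul1 := (adjoin_one mul).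

(* Collapsing the adjoined identity onto e retracts M^1 onto M. *)
Definition collapse (x : option M) : M := if x is Some y then y else e.

Lemma collapse_mul x y : collapse (mul1 x y) = mul (collapse x) (collapse y).
Proof. by case: x => [x|]; case: y => [y|] //=; rewrite ?mul1m ?mulm1. Qed.

Lemma adjoin_one_Some_collapse a s : mul1 (Some a) s = Some (mul a (collapse s)).
Proof. by case: s => [s|] //=; rewrite mulm1. Qed.

Lemma adjoin_principal_right_Howson :
  principal_right_Howson mul -> principal_right_Howson mul1.
Proof.
move=> H [a|] [b|].
- have [L [L_sound L_complete]] := H a b.
  exists (map (fun q => (Some q.1, Some q.2)) L); split.
  + by move=> q /in_map_iff [q' [<- Hq']] /=; rewrite L_sound.
  + move=> s t; rewrite !adjoin_one_Some_collapse => -[] /L_complete [q Hq [m Em]].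
    exists (Some q.1, Some q.2); first exact: (in_map (fun q => (Some q.1, Some q.2))).
    by exists (Some m); rewrite /= Em.
- exists [:: (None, Some a)]; exact: (meet_witness_mem_r (adjoin_onem1 mul)).
- exists [:: (Some b, None)]; exact: (meet_witness_mem_l (adjoin_onem1 mul)).
- exists [:: (None, None)]; exact: (meet_witness_mem_l (adjoin_onem1 mul)).
Qed.

Lemma adjoin_finitely_right_equated :
  finitely_right_equated mul -> finitely_right_equated mul1.
Proof.
move=> H [a|]; last first.
  exists nil => s t; split=> [/= ->|C]; first exact: act_cong_gen_refl.
  by apply: (C (fun s t => mul1 None s = mul1 None t)); first exact: kernel_act_congruence.
have [G G_ker] := H a.
(* The extra generator identifies the two identities of M^1. *)
pose G1 := (None, Some e) :: map (fun q => (Some q.1, Some q.2)) G.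
have collapse_cong r : act_cong_gen mul1 G1 r (Some (collapse r)).
  case: r => [r|]; first exact: act_cong_gen_refl.
  by apply: (act_cong_gen_mem (h := (None, Some e))); left.
exists G1 => s t; split.
- rewrite !adjoin_one_Some_collapse => -[] /G_ker.
  move/(act_cong_gen_morph (f := Some) (g := Some) (actY := mul1) (fun x y => erefl)) => C.
  apply: act_cong_gen_trans (collapse_cong s) _.
  apply: act_cong_gen_trans (act_cong_gen_sym (collapse_cong t)).
  apply: C => h Hh; apply: (act_cong_gen_mem (h := (Some h.1, Some h.2))); right.
  exact: (in_map (fun q => (Some q.1, Some q.2))).
- move=> C; apply: (C (fun s t => mul1 (Some a) s = mul1 (Some a) t)).
    exact: kernel_act_congruence (adjoin_oneA mulA (Some a)).
  move=> h [<-|/in_map_iff [q [<- Hq]]] /=; first by rewrite mulm1.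
  by congr Some; apply/G_ker; apply: act_cong_gen_mem.
Qed.

Lemma WRC_adjoin_one : WRC mul <-> WRC mul1.
Proof.
split; last first.
  exact: (retract_WRC (emb := Some) (fun x y => erefl) collapse_mul (fun x => erefl) mulA
            mul1m mulm1 (adjoin_oneA mulA) (adjoin_one1m mul) (adjoin_onem1 mul)).
rewrite (WRCE mulA mul1m mulm1).
rewrite (WRCE (adjoin_oneA mulA) (adjoin_one1m mul) (adjoin_onem1 mul)).
case=> Hph Hfre; split.
- exact: adjoin_principal_right_Howson.
- exact: adjoin_finitely_right_equated.
Qed.

End AdjoinToMonoid.

Lemma WRC1E {T : Type} (op : T -> T -> T) :
  (forall x y z, op x (op y z) = op (op x y) z) ->
  WRC1 op <-> WRC (adjoin_one op).
Proof.
move=> opA; rewrite /WRC1; case: (classic (exists e, is_identity op e)) => [[e He]|He].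
- have E := WRC_adjoin_one opA (fun x => proj1 (He x)) (fun x => proj2 (He x)).
  by split=> [[W _]|W]; [apply/E/W; exists e | split=> // _; apply/E].
- by split=> [[_]|W]; [apply | split].
Qed.

(** * The monoid of alternating words *)

Section WordMonoid.
Variables (I : Type) (S : I -> Type) (op : forall i, S i -> S i -> S i).
Hypothesis opA : forall i (x y z : S i), op x (op y z) = op (op x y) z.

Local Notation letter := (sigT S).
Local Notation wmul := (wmul op).

Lemma eq_rect_refl i (ee : i = i) (b : S i) : eq_rect i S b i ee = b.
Proof. by rewrite (proof_irrelevance _ ee erefl). Qed.

Lemma existT_inj i (c d : S i) : existT S i c = existT S i d -> c = d.
Proof. by move=> E; have := projT2_eq E; rewrite eq_rect_refl. Qed.

Lemma merge_letters_same i (a b : S i) :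
  merge_letters op (existT S i a) (existT S i b) = Some (existT S i (op a b)).
Proof.
rewrite /merge_letters; case: excluded_middle_informative => [ee|//] /=.
by rewrite eq_rect_refl.
Qed.

Lemma merge_letters_diff i j (a : S i) (b : S j) : i <> j ->
  merge_letters op (existT S i a) (existT S j b) = None.
Proof. by rewrite /merge_letters; case: excluded_middle_informative. Qed.

Lemma wmul_cons x u v : u <> nil -> wmul (x :: u) v = x :: wmul u v.
Proof. by case: u. Qed.

Lemma wmul_single x y v : wmul (x :: nil) (y :: v) =
  if merge_letters op x y is Some z then z :: v else x :: y :: v.
Proof. by []. Qed.

Lemma wmulw0 u : wmul u nil = u.
Proof. by elim: u => [|x [|y u] IH] //; rewrite wmul_cons // IH. Qed.

Lemma wmul_cat u x w : wmul (u ++ x :: nil) w = u ++ wmul (x :: nil) w.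
Proof. by elim: u => [|y u IH] //=; rewrite -IH; case: u IH. Qed.

Lemma wmulA u v w : wmul u (wmul v w) = wmul (wmul u v) w.
Proof.
elim: u => [|x [|y u] IH] //; last first.
  rewrite !(@wmul_cons x) ?IH //; exact: wmul_nonnil.
clear IH; case: v => [//|[j b] v]; case: x => i a.
case: (excluded_middle_informative (i = j)) => [ee|ne]; last first.
  rewrite wmul_single merge_letters_diff // (@wmul_cons _ (existT S j b :: v)) //.
  have [[j' b'] [r [-> Hj]]] := wmul_hd op (existT S j b) v w.
  by rewrite wmul_single merge_letters_diff //; move: Hj => /= ->.
subst j; rewrite wmul_single merge_letters_same.
case: v => [|y v].
- case: w => [|[k c] w]; first by rewrite /= merge_letters_same.
  case: (excluded_middle_informative (i = k)) => [ee|ne].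
  + by subst k; rewrite !wmul_single !merge_letters_same wmul_single merge_letters_same opA.
  + by rewrite !wmul_single !merge_letters_diff // wmul_single merge_letters_same.
- rewrite !(@wmul_cons _ (y :: v)) //.
  have [y' [r [-> _]]] := wmul_hd op y v w.
  by rewrite wmul_single merge_letters_same.
Qed.

Definition head_in i (w : list letter) : option (S i) :=
  if w is x :: _ then
    match excluded_middle_informative (projT1 x = i) with
    | left e => Some (eq_rect _ S (projT2 x) i e)
    | right _ => None
    end
  else None.

Definition behead_in i (w : list letter) : list letter :=
  if w is x :: w' then
    if excluded_middle_informative (projT1 x = i) then w' else w
  else nil.

Definition starts_outside i (w : list letter) : Prop :=
  if w is x :: _ then projT1 x <> i else True.

Definition embed_list i (t : option (S i)) : list letter :=
  if t is Some a then existT S i a :: nil else nil.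

Definition op1 i (a : S i) (t : option (S i)) : S i :=
  if t is Some b then op a b else a.

Lemma adjoin_one_SomeE i (a : S i) t :
  adjoin_one (@op i) (Some a) t = Some (op1 a t).
Proof. by case: t. Qed.

Lemma embed_list_mul i (t s : option (S i)) :
  embed_list (adjoin_one (@op i) t s) = wmul (embed_list t) (embed_list s).
Proof. by case: t => [a|]; case: s => [b|] //=; rewrite merge_letters_same. Qed.

Lemma wmul_letter i (a : S i) w :
  wmul (existT S i a :: nil) w = existT S i (op1 a (head_in i w)) :: behead_in i w.
Proof.
case: w => [|[j b] w] //=.
case: excluded_middle_informative => [ee|ne] /=; first by subst j; rewrite merge_letters_same.
by rewrite merge_letters_diff // => E; apply: ne.
Qed.

Lemma wmul_last u i (a : S i) w :
  wmul (u ++ existT S i a :: nil) w =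
  u ++ existT S i (op1 a (head_in i w)) :: behead_in i w.
Proof. by rewrite wmul_cat wmul_letter. Qed.

Lemma head_in_embed i t r : starts_outside i r ->
  head_in i (wmul (embed_list t) r) = t /\ behead_in i (wmul (embed_list t) r) = r.
Proof.
case: t => [b|] Hr; last first.
  by case: r Hr => [|[j c] r] //= Hr; case: excluded_middle_informative.
rewrite [embed_list _]/= wmul_letter /=.
case: excluded_middle_informative => // ee; rewrite eq_rect_refl.
case: r Hr => [|[j c] r] //= Hr.
by case: excluded_middle_informative => // E; case: (Hr E).
Qed.

Lemma embed_head_in i w : alt w ->
  w = wmul (embed_list (head_in i w)) (behead_in i w) /\ starts_outside i (behead_in i w).
Proof.
case: w => [|[j b] w] //= Hw.
case: excluded_middle_informative => [ee|ne] //=; subst j.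
case: w Hw => [|[k c] w] //= [Hik _].
by rewrite merge_letters_diff //; split => // E; apply: Hik.
Qed.

Lemma wmul_last_embed u i (a : S i) t r : starts_outside i r ->
  wmul (u ++ existT S i a :: nil) (wmul (embed_list t) r) = u ++ existT S i (op1 a t) :: r.
Proof. by move=> Hr; rewrite wmul_last; case: (head_in_embed t Hr) => -> ->. Qed.

Lemma alt_catr (u w : list letter) : alt (u ++ w)%list -> alt w.
Proof. by elim: u => [|x u IH] // /alt_tail /IH. Qed.

Lemma alt_starts_outside (x : letter) r : alt (x :: r) -> starts_outside (projT1 x) r.
Proof. by case: r => [|y r] //= [H _] E; apply: H. Qed.

Lemma alt_behead_in i (w : list letter) : alt w -> alt (behead_in i w).
Proof.
by case: w => [|x w] //= H; case: excluded_middle_informative => // ?; exact: alt_tail H.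
Qed.

Lemma last_letter (u : list letter) : u <> nil -> exists u' i a, u = u' ++ existT S i a :: nil.
Proof.
elim: u => [//|x u IH] _; case: u IH => [|y u] IH; first by case: x => i a; exists nil, i, a.
have [u' [i [a ->]]] := IH (@nil_cons _ _ _ \o esym).
by exists (x :: u'), i, a.
Qed.

Lemma cat_cons_eq (u v r r' : list letter) x y :
  u ++ x :: r = v ++ y :: r' ->
  [/\ u = v, x = y & r = r'] \/ (exists q, v = u ++ x :: q) \/ (exists q, u = v ++ y :: q).
Proof.
elim: u v => [|z u IH] [|t v] /=.
- by case=> -> ->; left.
- by case=> -> ->; right; left; exists v.
- by case=> -> <-; right; right; exists u.
- case=> -> /IH [[-> -> ->]|[[q ->]|[q ->]]]; [left | right; left | right; right];
    by [|exists q].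
Qed.

Lemma head_in_embed_list i t : head_in i (embed_list t) = t.
Proof.
by case: t => [a|] //=; case: excluded_middle_informative => // ee; rewrite eq_rect_refl.
Qed.

Lemma behead_in_embed_list i (t : option (S i)) : behead_in i (embed_list t) = nil.
Proof. by case: t => [a|] //=; case: excluded_middle_informative. Qed.

Lemma wmul_last_eq u i (a b : S i) s t :
  wmul (u ++ existT S i a :: nil) s = wmul (u ++ existT S i b :: nil) t <->
  op1 a (head_in i s) = op1 b (head_in i t) /\ behead_in i s = behead_in i t.
Proof.
rewrite !wmul_last; split=> [/app_inv_head [/existT_inj -> ->] //|[-> ->] //].
Qed.

Definition word : Type := {w : list letter | alt w}.

Definition word_mul (u v : word) : word :=
  exist _ (wmul (sval u) (sval v)) (wmul_alt op (svalP u) (svalP v)).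

Definition word1 : word := exist _ nil Logic.I.

Lemma word_eq (u v : word) : sval u = sval v -> u = v.
Proof. by case: u v => [u Hu] [v Hv] /= E; subst v; rewrite (proof_irrelevance _ Hu Hv). Qed.

Lemma word_mulA u v w : word_mul u (word_mul v w) = word_mul (word_mul u v) w.
Proof. apply: word_eq; exact: wmulA. Qed.

Lemma word_mul1w u : word_mul word1 u = u.
Proof. exact: word_eq. Qed.

Lemma word_mulw1 u : word_mul u word1 = u.
Proof. apply: word_eq; exact: wmulw0. Qed.

Lemma alt_embed_list i (t : option (S i)) : alt (embed_list t).
Proof. by case: t. Qed.

Definition embed i (t : option (S i)) : word := exist _ (embed_list t) (alt_embed_list t).

Lemma embed_mul i (t s : option (S i)) :
  embed (adjoin_one (@op i) t s) = word_mul (embed t) (embed s).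
Proof. apply: word_eq; exact: embed_list_mul. Qed.

Definition behead_word i (s : word) : word :=
  exist _ (behead_in i (sval s)) (alt_behead_in i (svalP s)).

Lemma embed_head_word i s : s = word_mul (embed (head_in i (sval s))) (behead_word i s).
Proof. apply: word_eq; exact: (embed_head_in i (svalP s)).1. Qed.

Lemma mem_word_ideal (u w : word) u' i (a : S i) t q :
  sval u = u' ++ existT S i a :: nil ->
  sval w = u' ++ existT S i (op1 a t) :: q -> exists m, w = word_mul u m.
Proof.
move=> Hu Hw.
have Aq : alt (existT S i (op1 a t) :: q).
  by apply: (@alt_catr u'); rewrite -Hw; exact: svalP.
exists (word_mul (embed t) (exist _ q (alt_tail Aq))); apply: word_eq.
by rewrite /= Hu wmul_last_embed ?Hw //; apply: alt_starts_outside Aq.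
Qed.

Lemma word_mul_last_eq (u v : word) u' i (a b : S i) s t :
  sval u = u' ++ existT S i a :: nil -> sval v = u' ++ existT S i b :: nil ->
  word_mul u s = word_mul v t <->
  adjoin_one (@op i) (Some a) (head_in i (sval s)) =
    adjoin_one (@op i) (Some b) (head_in i (sval t)) /\
  behead_word i s = behead_word i t.
Proof.
move=> Hu Hv; rewrite !adjoin_one_SomeE; split.
- move/(f_equal sval); rewrite /= Hu Hv wmul_last_eq => -[-> Er].
  by split=> //; apply: word_eq.
- case=> -[Eh] /(f_equal sval) /= Er.
  by apply: word_eq; rewrite /= Hu Hv; apply/wmul_last_eq.
Qed.

Lemma word_mul_embed_last (u : word) u' i (a : S i) t :
  sval u = u' ++ existT S i a :: nil ->
  sval (word_mul u (embed t)) = u' ++ existT S i (op1 a t) :: nil.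
Proof. by move=> Hu; rewrite /= Hu wmul_last head_in_embed_list behead_in_embed_list. Qed.

Lemma word_finitely_right_equated :
  (forall i, finitely_right_equated (adjoin_one (@op i))) ->
  finitely_right_equated word_mul.
Proof.
move=> Hfre u.
case: (classic (sval u = nil)) => [u0|/last_letter [u' [i [a Hu]]]].
  have -> : u = word1 by apply: word_eq.
  exists nil => s t; rewrite !word_mul1w; split=> [->|C].
    exact: act_cong_gen_refl.
  apply: (C (fun s t => s = t)) => //.
  by apply: (kernel_act_congruence (f := id)).
have [G G_ker] := Hfre i (Some a).
exists (map (fun h => (embed h.1, embed h.2)) G) => s t; split.
- move/(word_mul_last_eq _ _ Hu Hu) => -[/G_ker C Er].
  rewrite (embed_head_word i s) (embed_head_word i t) Er.
  apply: act_cong_gen_act; move: C.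
  apply: (act_cong_gen_morph (f := @embed i) (g := @embed i) (@embed_mul i)) => h Hh.
  apply: (act_cong_gen_mem (h := (embed h.1, embed h.2))).
  exact: (in_map (fun h => (embed h.1, embed h.2))).
- move=> C; apply: (C (fun s t => word_mul u s = word_mul u t)).
    exact: kernel_act_congruence (word_mulA u).
  move=> h /in_map_iff [g [<- Hg]] /=.
  have := (G_ker g.1 g.2).2 (act_cong_gen_mem Hg); rewrite !adjoin_one_SomeE => -[E].
  by apply: word_eq; rewrite !(word_mul_embed_last _ Hu) E.
Qed.

Lemma head_embed_behead i x s :
  head_in i (sval (word_mul (embed x) (behead_word i s))) = x /\
  behead_word i (word_mul (embed x) (behead_word i s)) = behead_word i s.
Proof.
have [Eh Eb] := head_in_embed x (embed_head_in i (svalP s)).2.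
by split; [exact: Eh | apply: word_eq].
Qed.

Lemma word_common_multiple (u v s t : word) u' v' i j (a : S i) (b : S j) :
  sval u = u' ++ existT S i a :: nil -> sval v = v' ++ existT S j b :: nil ->
  word_mul u s = word_mul v t ->
  (u' = v' /\ i = j) \/ (exists m, v = word_mul u m) \/ (exists m, u = word_mul v m).
Proof.
move=> Hu Hv /(f_equal sval); rewrite /= Hu Hv !wmul_last.
case/cat_cons_eq => [[-> /(f_equal (@projT1 _ _)) /= Eij _]|[[q Hq]|[q Hq]]].
- by left.
- right; left; apply: (mem_word_ideal (q := q ++ existT S j b :: nil) Hu).
  by rewrite Hv Hq -app_assoc.
- right; right; apply: (mem_word_ideal (q := q ++ existT S i a :: nil) Hv).
  by rewrite Hu Hq -app_assoc.
Qed.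

Lemma word_principal_right_Howson :
  (forall i, principal_right_Howson (adjoin_one (@op i))) ->
  principal_right_Howson word_mul.
Proof.
move=> Hph u v.
case: (classic (exists m, v = word_mul u m)) => [[m Hm]|Nv].
  by exists [:: (m, word1)]; apply: meet_witness_mem_l word_mulw1 _ _ _ Hm.
case: (classic (exists m, u = word_mul v m)) => [[m Hm]|Nu].
  by exists [:: (word1, m)]; apply: meet_witness_mem_r word_mulw1 _ _ _ Hm.
have [u' [i [a Hu]]] : exists u' i a, sval u = u' ++ existT S i a :: nil.
  apply: last_letter => u0; apply: Nv; exists v.
  by rewrite (_ : u = word1) ?word_mul1w //; apply: word_eq.
have [v' [j [b Hv]]] : exists v' j b, sval v = v' ++ existT S j b :: nil.
  apply: last_letter => v0; apply: Nu; exists u.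
  by rewrite (_ : v = word1) ?word_mul1w //; apply: word_eq.
case: (classic (u' = v' /\ i = j)) => [[Euv Eij]|Nuv]; last first.
  exists nil; split=> // s t /(word_common_multiple Hu Hv).
  by case=> [//|[//|//]].
subst v' j.
have [L [L_sound L_complete]] := Hph i (Some a) (Some b).
exists (map (fun p => (embed p.1, embed p.2)) L); split.
- move=> p /in_map_iff [q [<- /L_sound]]; rewrite !adjoin_one_SomeE => -[E].
  by apply: word_eq; rewrite (word_mul_embed_last _ Hu) (word_mul_embed_last _ Hv) E.
- move=> s t /(word_mul_last_eq _ _ Hu Hv) [/L_complete [q Hq [m Em]] _].
  exists (embed q.1, embed q.2); first exact: (in_map (fun p => (embed p.1, embed p.2))).
  exists (word_mul (embed m) (behead_word i s)).
  rewrite -word_mulA (word_mulA (embed q.1)) -embed_mul {1}(embed_head_word i s).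
  have [h1 b1] := head_embed_behead (head_in i (sval s)) s.
  have [h2 b2] := head_embed_behead (adjoin_one (@op i) q.1 m) s.
  by apply/(word_mul_last_eq _ _ Hu Hu); rewrite h1 h2 b1 b2 (adjoin_oneA (@opA i)).
Qed.

(* The retraction onto the factor S_i^1, erasing all letters from other factors. *)
Fixpoint project i (w : list letter) : option (S i) :=
  if w is x :: w' then adjoin_one (@op i) (head_in i (x :: nil)) (project i w') else None.

Lemma project_mul i u v :
  project i (wmul u v) = adjoin_one (@op i) (project i u) (project i v).
Proof.
have opA1 := adjoin_oneA (@opA i).
elim: u => [|x [|y u] IH] //; last first.
  by rewrite (@wmul_cons x (y :: u) v) //= IH opA1.
clear IH; case: v => [|y v]; first by rewrite adjoin_onem1.
case: x => j a; case: y => k b.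
case: (excluded_middle_informative (j = k)) => [ee|ne]; last first.
  by rewrite wmul_single merge_letters_diff //= adjoin_onem1.
subst k; rewrite wmul_single merge_letters_same /=.
case: excluded_middle_informative => [ee|ne] /=; last by case: (project i v).
by subst i; case: (project j v) => [c|] /=; rewrite ?opA.
Qed.

Lemma project_embed i t : project i (embed_list t) = t.
Proof. by case: t => [a|] //=; rewrite adjoin_onem1 -(head_in_embed_list (Some a)). Qed.

Lemma word_WRCE : WRC word_mul <-> forall i, WRC (adjoin_one (@op i)).
Proof.
have opA1 i := adjoin_oneA (@opA i).
split=> [W i|H].
- have proj_mul u v : project i (sval (word_mul u v)) =
    adjoin_one (@op i) (project i (sval u)) (project i (sval v)) by apply: project_mul.
  have embedK : cancel (@embed i) (fun w => project i (sval w)) by apply: project_embed.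
  exact: (retract_WRC (@embed_mul i) proj_mul embedK (opA1 i) (adjoin_one1m _)
            (adjoin_onem1 _) word_mulA word_mul1w word_mulw1).
- have factorE i := WRCE (opA1 i) (adjoin_one1m _) (adjoin_onem1 (@op i)).
  apply/(WRCE word_mulA word_mul1w word_mulw1).
  split; [apply: word_principal_right_Howson | apply: word_finitely_right_equated].
  all: by move=> i; case/factorE: (H i).
Qed.

End WordMonoid.

Section FreeProductWithIdentity.
Variables (I : Type) (S : I -> Type) (op : forall i, S i -> S i -> S i).
Hypothesis opA : forall i (x y z : S i), op x (op y z) = op (op x y) z.

Local Notation word := (word S).
Local Notation word_mul := (word_mul op).

Lemma FP_eq (u v : FP S) : sval u = sval v -> u = v.
Proof. by case: u v => [u Hu] [v Hv] /= E; subst v; rewrite (proof_irrelevance _ Hu Hv). Qed.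

Lemma fp_mulA x y z : fp_mul op x (fp_mul op y z) = fp_mul op (fp_mul op x y) z.
Proof. apply: FP_eq; exact: wmulA. Qed.

Definition word_of_FP1 (x : option (FP S)) : word :=
  if x is Some w then exist _ (sval w) (proj2 (svalP w)) else word1 S.

Definition FP1_of_word (w : word) : option (FP S) :=
  match excluded_middle_informative (sval w = nil) with
  | left _ => None
  | right ne => Some (exist _ (sval w) (conj ne (svalP w)))
  end.

Lemma word_of_FP1_mul x y :
  word_of_FP1 (adjoin_one (fp_mul op) x y) = word_mul (word_of_FP1 x) (word_of_FP1 y).
Proof. by case: x => [x|]; case: y => [y|]; apply: word_eq => //=; rewrite wmulw0. Qed.

Lemma word_of_FP1K : cancel word_of_FP1 FP1_of_word.
Proof.
rewrite /FP1_of_word => -[x|] /=; case: excluded_middle_informative => // H.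
- by case: (proj1 (svalP x) H).
- by congr Some; apply: FP_eq.
Qed.

Lemma FP1_of_wordK : cancel FP1_of_word word_of_FP1.
Proof. by rewrite /FP1_of_word => w; case: excluded_middle_informative => ?; apply: word_eq. Qed.

Lemma FP1_of_word_mul x y :
  FP1_of_word (word_mul x y) = adjoin_one (fp_mul op) (FP1_of_word x) (FP1_of_word y).
Proof. by rewrite -{1}(FP1_of_wordK x) -{1}(FP1_of_wordK y) -word_of_FP1_mul word_of_FP1K. Qed.

Lemma FP1_WRCE : WRC (adjoin_one (fp_mul op)) <-> WRC word_mul.
Proof.
have FP1A := adjoin_oneA fp_mulA.
split.
- exact: (retract_WRC FP1_of_word_mul word_of_FP1_mul FP1_of_wordK (word_mulA opA)
            (word_mul1w op) (word_mulw1 op) FP1A (adjoin_one1m _) (adjoin_onem1 _)).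
- exact: (retract_WRC word_of_FP1_mul FP1_of_word_mul word_of_FP1K FP1A (adjoin_one1m _)
            (adjoin_onem1 _) (word_mulA opA) (word_mul1w op) (word_mulw1 op)).
Qed.

End FreeProductWithIdentity.

Unset Implicit Arguments.

Theorem mainTheorem3 (I : Type) (S : I -> Type)
    (op : forall i, S i -> S i -> S i)
    (op_assoc : forall i (x y z : S i), op i x (op i y z) = op i (op i x y) z) :
  WRC1 (@fp_mul I S op) <-> (forall i : I, WRC1 (op i)).
Proof.
rewrite (WRC1E (fp_mulA op_assoc)) (FP1_WRCE op_assoc) (word_WRCE op_assoc).
by split=> H i; apply/(WRC1E (op_assoc i)); apply: H.
Qed.
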